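(* Let $\vec d=(\vec a,\vec b)$ be a bidegree sequence of length $n$ with the entries of $\vec a$ in non-increasing order and $\sum_{i=1}^n a_i=\sum_{i=1}^n b_i=n\bar c$. Let $M_a=\max_i a_i$ and $M_b=\max_i b_i$. If $M_aM_b\le n\bar c+1$, then $\vec d$ is graphic with loops. In particular, if $\max_i a_i=\max_i b_i$ and $\max\vec d\le\lfloor\sqrt{n\bar c+1}\rfloor$, then $\vec d$ is graphic with loops.
   Context: A bidegree sequence of length $n$ is a pair $\vec d=(\vec a,\vec b)$ with $\vec a=(a_1,\dots,a_n)\in\mathbb{N}_0^n$ and $\vec b=(b_1,\dots,b_n)\in\mathbb{N}_0^n$. It is graphic with loops if there is an $n\times n$ matrix with entries in $\{0,1\}$ whose $i$th row sum is $a_i$ and whose $i$th column sum is $b_i$ for every $i\in[1..n]$; it is graphic if such a matrix exists with all diagonal entries equal to $0$. $\max\vec d$ and $\min\vec d$ denote the maximum and minimum over all $2n$ entries $a_1,\dots,a_n,b_1,\dots,b_n$. The number $\bar c$ (the average degree) is defined by $\sum_i a_i=\sum_i b_i=n\bar c$. *)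

From mathcomp Require Import all_boot.
From Stdlib Require Import PeanoNat.
Set Implicit Arguments. Unset Strict Implicit. Unset Printing Implicit Defensive.

(* graphic with loops: some 0/1 matrix (entries in bool) with row sums a
   and column sums b; diagonal entries unrestricted. *)
Definition graphic_with_loops (n : nat) (a b : 'I_n -> nat) : Prop :=
  exists M : 'I_n -> 'I_n -> bool,
    (forall i, \sum_(j < n) (M i j : nat) = a i) /\
    (forall j, \sum_(i < n) (M i j : nat) = b j).

Definition nonincreasing (n : nat) (a : 'I_n -> nat) : Prop :=
  forall i j : 'I_n, i <= j -> a j <= a i.

Definition maxd (n : nat) (a b : 'I_n -> nat) : nat :=
  maxn (\max_(i < n) a i) (\max_(i < n) b i).

From mathcomp Require Import all_boot zify.
From Stdlib Require Import PeanoNat.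

(* Induction on the total degree S.  Let A = max a (attained at row i0) and
   B = max b.  Fill row i0 with ones in A columns of positive column sum,
   lower those column sums by one and clear the row; the remaining sequence
   has total degree S - A.  Its maxima satisfy the hypothesis again provided
   either every column of sum B gets a one (the new max of b is <= B - 1),
   or A * B + A <= S.  Up to transposition one of these can be arranged: if
   more than B rows have degree A then already (B + 1) * A <= S, so either
   the rows of degree A or the columns of degree B are few enough to be hit. *)

Section GraphicWithLoops.
Variable n : nat.
Implicit Types (a b : 'I_n -> nat) (C : {set 'I_n}).

Local Notation sum a := (\sum_(i < n) a i).
Local Notation mx a := (\max_(i < n) a i).

Definition clear_row a (i0 : 'I_n) i := if i == i0 then 0 else a i.
Definition dec_on b C j := b j - (j \in C).
Definition supp b := [set j | 0 < b j].

Lemma graphic_with_loops_tr a b :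
  graphic_with_loops a b -> graphic_with_loops b a.
Proof. by case=> M [Hr Hc]; exists (fun i j => M j i). Qed.

Lemma graphic_with_loops_add_row a b (i0 : 'I_n) C :
  #|C| = a i0 -> C \subset supp b ->
  graphic_with_loops (clear_row a i0) (dec_on b C) -> graphic_with_loops a b.
Proof.
move=> HC /subsetP HCb [M [Hr Hc]].
have M0 j : M i0 j = false.
  by have := Hr i0; rewrite /clear_row eqxx (bigD1 j) //=; case: (M i0 j).
exists (fun i j => if i == i0 then j \in C else M i j); split.
- move=> i; case: eqP => [->|/eqP Hne]; last by have := Hr i; rewrite /clear_row (negPf Hne).
  by rewrite -HC -sum1_card [RHS]big_mkcond /=; apply: eq_bigr => j _; case: (j \in C).
- move=> j; rewrite (bigD1 i0) //= eqxx.
  have -> : \sum_(i < n | i != i0) ((if i == i0 then j \in C else M i j) : nat)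
            = \sum_(i < n) (M i j : nat).
    rewrite [RHS](bigD1 i0) //= M0; apply: eq_bigr => i /negPf -> //.
  rewrite Hc /dec_on; case HjC: (j \in C) => /=; last by rewrite subn0.
  by have := HCb j HjC; rewrite inE; lia.
Qed.

Lemma sum_clear_row a (i0 : 'I_n) : sum (clear_row a i0) = sum a - a i0.
Proof.
rewrite [in RHS](bigD1 i0) //= (bigD1 i0) //= /clear_row eqxx add0n addKn.
by apply: eq_bigr => i /negPf ->.
Qed.

Lemma sum_dec_on b C : C \subset supp b -> sum (dec_on b C) = sum b - #|C|.
Proof.
move=> /subsetP HCb; suff -> : sum b = sum (dec_on b C) + #|C| by rewrite addnK.
rewrite -sum1_card [X in _ + X] big_mkcond -big_split /=; apply: eq_bigr => j _.
rewrite /dec_on; case HjC: (j \in C) => /=; last by rewrite subn0 addn0.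
by have := HCb j HjC; rewrite inE; lia.
Qed.

Lemma bigmax_clear_row_le a (i0 : 'I_n) : mx (clear_row a i0) <= mx a.
Proof.
by apply/bigmax_leqP => i _; rewrite /clear_row; case: eqP => // _; apply: leq_bigmax.
Qed.

Lemma bigmax_dec_on_le b C : mx (dec_on b C) <= mx b.
Proof. by apply/bigmax_leqP => j _; apply: leq_trans (leq_subr _ _) (leq_bigmax _). Qed.

Lemma bigmax_dec_on_lt b C :
  [set j | b j == mx b] \subset C -> mx (dec_on b C) <= mx b - 1.
Proof.
move=> /subsetP HQC; apply/bigmax_leqP => j _; rewrite /dec_on.
have := leq_bigmax j (F := b).
case HjC: (j \in C) => /=; first by lia.
have : j \notin [set j | b j == mx b] by apply/negP => /HQC; rewrite HjC.
rewrite inE subn0 => Hne Hle.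
have : b j < mx b by rewrite ltn_neqAle Hne Hle.
by move=> /(leq_sub2r 1); rewrite subn1.
Qed.

Lemma exists_card_between (Q P : {set 'I_n}) k :
  Q \subset P -> #|Q| <= k <= #|P| ->
  exists C, [/\ Q \subset C, C \subset P & #|C| = k].
Proof.
move=> HQP; elim: k => [|k IH].
  rewrite leqn0 => /andP[/eqP/cards0_eq -> _].
  by exists set0; rewrite !sub0set cards0.
move=> /andP[]; rewrite leq_eqVlt => /orP[/eqP <- _|HQk HkP].
  by exists Q; split.
have [C [HQC HCP HCk]] := IH (ltac:(by rewrite -ltnS HQk ltnW)).
have : ~~ (P \subset C) by apply/negP => /subset_leq_card; lia.
case/subsetPn => x HxP HxC; exists (x |: C).
by rewrite (subset_trans HQC (subsetUr _ _)) subUset sub1set HxP HCP cardsU1 HxC HCk; split.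
Qed.

Lemma sum_le_card_supp b c : (forall j, b j <= c) -> sum b <= #|supp b| * c.
Proof.
move=> Hc; rewrite (bigID (mem (supp b))) /= [X in _ + X]big1; last first.
  by move=> j; rewrite inE; case: (b j).
by rewrite addn0 -sum_nat_const leq_sum.
Qed.

Lemma card_argmax_mul_le a : #|[set i | a i == mx a]| * mx a <= sum a.
Proof.
rewrite -sum_nat_const (eq_bigr a) => [|i]; last by rewrite inE => /eqP.
by rewrite [leqRHS](bigID (mem [set i | a i == mx a])) /= leq_addr.
Qed.

Lemma leq_term_sum a i : a i <= sum a.
Proof. by rewrite (bigD1 i) //= leq_addr. Qed.

Lemma bigmax_le_sum a : mx a <= sum a.
Proof. by apply/bigmax_leqP => i _; apply: leq_term_sum. Qed.

Lemma exists_row_of_max a : 0 < sum a -> exists i0, a i0 = mx a.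
Proof.
case: (pickP (fun i => 0 < a i)) => [i Hi|Ha0] Hsum; last first.
  by move: Hsum; rewrite big1 // => i _; have := Ha0 i; case: (a i).
by have [i0 ->] := eq_bigmax a (ltac:(by apply/card_gt0P; exists i)); exists i0.
Qed.

Lemma bigmax_le_card_supp a b :
  sum a = sum b -> mx a * mx b <= sum a + 1 -> mx a <= #|supp b|.
Proof.
move=> Hab Hmul; rewrite leqNgt; apply/negP => Hlt.
have Hb : sum b <= #|supp b| * mx b by apply: sum_le_card_supp => j; apply: leq_bigmax.
have := bigmax_le_sum a.
(* S <= #|supp b| * B < A * B <= S + 1 forces B = 1, hence S <= #|supp b| < A <= S. *)
by nia.
Qed.

Lemma bigmax_gt0 a : 0 < sum a -> 0 < mx a.
Proof. by have := @sum_le_card_supp a (mx a) (fun j => leq_bigmax j); nia. Qed.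

Lemma exists_columns_for_row a b :
  sum a = sum b -> 0 < sum b -> mx a * mx b <= sum a + 1 ->
  #|[set j | b j == mx b]| <= mx a \/ mx a * mx b + mx a <= sum a ->
  exists C, [/\ C \subset supp b, #|C| = mx a &
    mx (dec_on b C) <= mx b - 1 \/ mx a * mx b + mx a <= sum a].
Proof.
move=> Hab Hb_gt0 Hmul Hcase.
have HAP : mx a <= #|supp b| by apply: bigmax_le_card_supp.
case: Hcase => [HQ | HS].
- have HQb : [set j | b j == mx b] \subset supp b.
    by apply/subsetP => j; rewrite !inE => /eqP ->; apply: bigmax_gt0.
  have [C [HQC HCb HCA]] :=
    exists_card_between _ _ (mx a) HQb (ltac:(by rewrite HQ HAP)).
  by exists C; split=> //; left; apply: bigmax_dec_on_lt.
- have [C [_ HCb HCA]] :=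
    exists_card_between _ _ (mx a) (sub0set (supp b)) (ltac:(by rewrite cards0 HAP)).
  by exists C; split=> //; right.
Qed.

Lemma graphic_with_loops_bigmax_mul S a b :
  sum a = S -> sum b = S -> mx a * mx b <= S + 1 -> graphic_with_loops a b.
Proof.
elim/ltn_ind: S a b => S IH a b Ha Hb Hab.
have [S0 | S_gt0] := posnP S.
  exists (fun _ _ => false); split=> i; rewrite big1 //.
    by have := leq_term_sum a i; rewrite Ha S0 leqn0 => /eqP.
  by have := leq_term_sum b i; rewrite Hb S0 leqn0 => /eqP.
wlog Hcase : a b Ha Hb Hab /
    #|[set j | b j == mx b]| <= mx a \/ mx a * mx b + mx a <= S.
  move=> Hwlog.
  have [HQ | HQ] := leqP #|[set i | a i == mx a]| (mx b).
    by apply/graphic_with_loops_tr/Hwlog => //; [rewrite mulnC | left].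
  by apply: Hwlog => //; right; have := card_argmax_mul_le a; rewrite Ha; nia.
have [i0 Hi0] : exists i0, a i0 = mx a by apply: exists_row_of_max; rewrite Ha.
have HA_gt0 : 0 < mx a by apply: bigmax_gt0; rewrite Ha.
have := @exists_columns_for_row a b; rewrite Ha Hb.
move=> /(_ erefl S_gt0 Hab Hcase) [C [HCb HCA Hdrop]].
apply: (graphic_with_loops_add_row a b i0 C); rewrite ?Hi0 //.
apply: (IH (S - mx a)); first lia.
- by rewrite sum_clear_row Ha Hi0.
- by rewrite sum_dec_on // Hb HCA.
have := bigmax_clear_row_le a i0; have := bigmax_dec_on_le b C.
by case: Hdrop; nia.
Qed.

End GraphicWithLoops.

Theorem theorem3 (n : nat) (a b : 'I_n -> nat) :
  nonincreasing a ->
  \sum_(i < n) a i = \sum_(i < n) b i ->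
  ((\max_(i < n) a i) * (\max_(i < n) b i) <= \sum_(i < n) a i + 1 ->
     graphic_with_loops a b) /\
  (\max_(i < n) a i = \max_(i < n) b i ->
   maxd a b <= Nat.sqrt (\sum_(i < n) a i + 1) ->
     graphic_with_loops a b).
Proof.
move=> _ Hsum; split=> [|Hmax Hd]; first exact: graphic_with_loops_bigmax_mul.
apply: graphic_with_loops_bigmax_mul => //.
move: Hd; rewrite /maxd -Hmax maxnn => Hsqrt.
apply: leq_trans (leq_mul Hsqrt Hsqrt) _.
by case: (Nat.sqrt_spec' (\sum_(i < n) a i + 1)) => /leP.
Qed.
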